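(* For every integer $i\ge 1$, $\lim_{k\to\infty}\overline{\alpha}(\{1,2i+1,2k\})=\frac12$.
   Context: For a finite set $S$ of positive integers, the distance graph $G(S)$ has vertex set $\mathbb{Z}$, with $i,j$ adjacent iff $|i-j|\in S$. The density of $A\subseteq\mathbb{Z}$ is $\delta(A)=\limsup_{N\to\infty}\frac{|A\cap[-N,N]|}{2N+1}$, and the independence ratio $\overline{\alpha}(S)$ is the supremum of $\delta(A)$ over independent sets $A$ of $G(S)$. *)

From Stdlib Require Import Reals ZArith List.
From Coquelicot Require Import Coquelicot.
Import ListNotations.
Open Scope R_scope.

(* A subset of Z is represented by its (boolean) indicator function. *)

Definition independent (S : list Z) (A : Z -> bool) : Prop :=
  forall x y : Z, A x = true -> A y = true -> ~ In (Z.abs (x - y)) S.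

(* |A ∩ [-N, N]| *)
Definition count_in (A : Z -> bool) (N : nat) : nat :=
  length (filter (fun j : nat => A (Z.of_nat j - Z.of_nat N)%Z)
                 (seq 0 (2 * N + 1))).

Definition dens_seq (A : Z -> bool) (N : nat) : R :=
  INR (count_in A N) / INR (2 * N + 1).

Definition density (A : Z -> bool) : Rbar := LimSup_seq (dens_seq A).

(* independence ratio: sup of δ(A) over independent sets A of G(S)
   (densities lie in [0,1], so they are finite reals) *)
Definition indep_ratio (S : list Z) : Rbar :=
  Lub_Rbar (fun x : R => exists A : Z -> bool,
                independent S A /\ density A = Finite x).

From Stdlib Require Import Reals ZArith List Lia Lra.
From Coquelicot Require Import Coquelicot.
Import ListNotations.
Open Scope R_scope.

(* Since 1 is a forbidden distance, an independent set contains at most one of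
   any two consecutive integers, so its density is at most 1/2.  Conversely,
   cut Z into blocks of length 2k and keep, in the q-th block, the positions
   r >= 2i+1 with r of the same parity as q.  Distance 1 and 2i+1 change the
   parity of r inside a block (and a gap of length 2i+1 at the start of each
   block stops them from crossing into the next one), while distance 2k keeps
   r but changes the parity of q.  Each block contains at least k-i-1 kept
   positions, so this independent set has density at least 1/2 - (i+2)/(2k). *)

Fixpoint count_range (A : Z -> bool) (a : Z) (n : nat) : nat :=
  match n with
  | O => O
  | S n' => (count_range A a n' + (if A (a + Z.of_nat n')%Z then 1 else 0))%nat
  end.

Lemma count_in_range (A : Z -> bool) (N : nat) :
  count_in A N = count_range A (- Z.of_nat N) (2 * N + 1).
Proof.
  unfold count_in. generalize (2 * N + 1)%nat as n. induction n as [|n IH]; [reflexivity|].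
  rewrite seq_S, filter_app, length_app, IH. cbn [count_range filter length].
  replace (Z.of_nat (0 + n) - Z.of_nat N)%Z with (- Z.of_nat N + Z.of_nat n)%Z by lia.
  destruct (A _); simpl; lia.
Qed.

Lemma count_range_add (A : Z -> bool) (a : Z) (n m : nat) :
  count_range A a (n + m) = (count_range A a n + count_range A (a + Z.of_nat n) m)%nat.
Proof.
  induction m as [|m IH]; [rewrite Nat.add_0_r; simpl; lia|].
  rewrite Nat.add_succ_r. cbn [count_range]. rewrite IH.
  replace (a + Z.of_nat (n + m))%Z with (a + Z.of_nat n + Z.of_nat m)%Z by lia.
  lia.
Qed.

Lemma count_range_le (A : Z -> bool) (a : Z) (n : nat) : (count_range A a n <= n)%nat.
Proof. induction n as [|n IH]; cbn [count_range]; [lia|]. destruct (A _); lia. Qed.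

Lemma count_range_no_consecutive (A : Z -> bool)
    (HA : forall z, A z = true -> A (z + 1)%Z = true -> False) (a : Z) (n : nat) :
  (count_range A a (2 * n) <= n)%nat.
Proof.
  induction n as [|n IH]; [simpl; lia|].
  replace (2 * S n)%nat with (2 * n + 2)%nat by lia.
  rewrite count_range_add.
  enough (count_range A (a + Z.of_nat (2 * n)) 2 <= 1)%nat by lia.
  cbn [count_range]. set (b := (a + Z.of_nat (2 * n))%Z).
  replace (b + Z.of_nat 0)%Z with b by lia.
  replace (b + Z.of_nat 1)%Z with (b + 1)%Z by lia.
  specialize (HA b). destruct (A b), (A (b + 1)%Z); simpl;
    [exfalso; exact (HA eq_refl eq_refl) | lia ..].
Qed.

Lemma count_range_mono (A : Z -> bool) (a : Z) (m n : nat) :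
  (m <= n)%nat -> (count_range A a m <= count_range A a n)%nat.
Proof.
  intros Hn. replace n with (m + (n - m))%nat by lia.
  rewrite count_range_add. lia.
Qed.

Lemma count_range_sub (A : Z -> bool) (a : Z) (d m n : nat) :
  (d + m <= n)%nat -> (count_range A (a + Z.of_nat d) m <= count_range A a n)%nat.
Proof.
  intros Hn. replace n with (d + m + (n - d - m))%nat by lia.
  rewrite !count_range_add. lia.
Qed.

Lemma count_range_step2_ge (A : Z -> bool) (a : Z) (n : nat) :
  (forall j, (j < n)%nat -> A (a + 2 * Z.of_nat j)%Z = true) ->
  (n <= count_range A a (2 * n))%nat.
Proof.
  induction n as [|n IH]; intros HA; [simpl; lia|].
  replace (2 * S n)%nat with (2 * n + 2)%nat by lia.
  rewrite count_range_add.
  assert (Hn : A (a + Z.of_nat (2 * n) + Z.of_nat 0)%Z = true).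
  { rewrite <- (HA n) by lia. f_equal. lia. }
  assert (n <= count_range A a (2 * n))%nat by (apply IH; auto).
  cbn [count_range]. rewrite Hn. lia.
Qed.

Lemma count_range_blocks_ge (A : Z -> bool) (a : Z) (p c n : nat) :
  (forall j, (j < n)%nat -> (c <= count_range A (a + Z.of_nat (j * p)) p)%nat) ->
  (n * c <= count_range A a (n * p))%nat.
Proof.
  induction n as [|n IH]; intros Hblock; [simpl; lia|].
  replace (S n * p)%nat with (n * p + p)%nat by lia.
  rewrite count_range_add.
  assert (n * c <= count_range A a (n * p))%nat by (apply IH; auto).
  specialize (Hblock n ltac:(lia)). lia.
Qed.

Lemma is_lim_seq_inv_INR : is_lim_seq (fun n => / INR n) 0.
Proof.
  replace (Finite 0) with (Rbar_inv p_infty) by reflexivity.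
  apply is_lim_seq_inv; [apply is_lim_seq_INR | discriminate].
Qed.

Lemma LimSup_seq_le_lim (u v : nat -> R) (l : Rbar) :
  (exists N, forall n, (N <= n)%nat -> u n <= v n) -> is_lim_seq v l ->
  Rbar_le (LimSup_seq u) l.
Proof.
  intros [N Huv] Hv.
  rewrite <- (is_LimSup_seq_unique v l (is_lim_LimSup_seq v l Hv)).
  apply LimSup_le. exists N. exact Huv.
Qed.

Lemma LimSup_seq_ge_frequently (u : nat -> R) (c : R) :
  (forall N, exists n, (N <= n)%nat /\ c <= u n) -> Rbar_le c (LimSup_seq u).
Proof.
  intros Hfreq.
  destruct (ex_LimSup_seq u) as [l Hl].
  rewrite (is_LimSup_seq_unique u l Hl).
  destruct l as [l| |]; simpl in *; auto.
  - destruct (Rle_dec c l) as [|Hlc]; auto. exfalso.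
    assert (Heps : 0 < c - l) by lra.
    destruct (Hl (mkposreal _ Heps)) as [_ [N HN]].
    destruct (Hfreq N) as [n [Hn Hc]].
    specialize (HN n Hn). simpl in HN. lra.
  - destruct (Hl c) as [N HN].
    destruct (Hfreq N) as [n [Hn Hc]].
    specialize (HN n Hn). lra.
Qed.

Lemma dens_seq_bounds (A : Z -> bool) (N : nat) : 0 <= dens_seq A N <= 1.
Proof.
  unfold dens_seq. rewrite count_in_range.
  assert (Hpos : 0 < INR (2 * N + 1)) by (apply lt_0_INR; lia).
  pose proof (le_INR _ _ (count_range_le A (- Z.of_nat N) (2 * N + 1))).
  pose proof (pos_INR (count_range A (- Z.of_nat N) (2 * N + 1))).
  split.
  - apply Rdiv_le_0_compat; lra.
  - apply (Rdiv_le_1 _ _ Hpos); lra.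
Qed.

Lemma density_finite (A : Z -> bool) : density A = Finite (real (density A)).
Proof.
  assert (Hlo : Rbar_le 0 (density A)).
  { apply LimSup_seq_ge_frequently. intros N. exists N.
    split; [lia | apply dens_seq_bounds]. }
  assert (Hhi : Rbar_le (density A) 1).
  { apply (LimSup_seq_le_lim _ (fun _ => 1)); [|apply is_lim_seq_const].
    exists 0%nat. intros n _. apply dens_seq_bounds. }
  destruct (density A); simpl in *; tauto.
Qed.

Lemma density_no_consecutive (A : Z -> bool)
    (HA : forall z, A z = true -> A (z + 1)%Z = true -> False) :
  real (density A) <= 1 / 2.
Proof.
  assert (Hle : Rbar_le (density A) (1 / 2)).
  { apply (LimSup_seq_le_lim _ (fun N => 1 / 2 + / INR N)).
    - exists 1%nat. intros N HN. unfold dens_seq. rewrite count_in_range, count_range_add.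
      set (a := (- Z.of_nat N)%Z).
      pose proof (count_range_no_consecutive A HA a N).
      pose proof (count_range_le A (a + Z.of_nat (2 * N)) 1).
      assert (HN1 : 1 <= INR N) by (apply (le_INR 1); exact HN).
      assert (Hc : INR (count_range A a (2 * N) + count_range A (a + Z.of_nat (2 * N)) 1)
                   <= INR N + 1).
      { rewrite <- S_INR. apply le_INR. lia. }
      replace (INR (2 * N + 1)) with (2 * INR N + 1) by (rewrite plus_INR, mult_INR; simpl; lra).
      apply Rle_trans with ((INR N + 1) / (2 * INR N + 1)).
      + apply Rmult_le_compat_r; [|exact Hc]. left; apply Rinv_0_lt_compat; lra.
      + replace ((INR N + 1) / (2 * INR N + 1)) with (1 / 2 + / (2 * (2 * INR N + 1)))
          by (field; lra).
        apply Rplus_le_compat_l, Rinv_le_contravar; lra.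
    - replace (Finite (1 / 2)) with (Rbar_plus (1 / 2) 0) by (simpl; f_equal; ring).
      apply is_lim_seq_plus'; [apply is_lim_seq_const | apply is_lim_seq_inv_INR]. }
  rewrite density_finite in Hle. exact Hle.
Qed.

Lemma density_ge_frequently (A : Z -> bool) (c : R) :
  (forall N, exists n, (N <= n)%nat /\ c <= dens_seq A n) -> c <= real (density A).
Proof.
  intros Hfreq. pose proof (LimSup_seq_ge_frequently _ c Hfreq) as Hc.
  fold (density A) in Hc. rewrite density_finite in Hc. exact Hc.
Qed.

Lemma independent_no_consecutive (S : list Z) (A : Z -> bool) :
  In 1%Z S -> independent S A -> forall z, A z = true -> A (z + 1)%Z = true -> False.
Proof.
  intros H1 HA z Hz Hz1. apply (HA z (z + 1)%Z Hz Hz1).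
  replace (Z.abs (z - (z + 1))) with 1%Z by lia. exact H1.
Qed.

Lemma indep_ratio_bounds (S : list Z) (A : Z -> bool) (c : R) :
  In 1%Z S -> independent S A -> c <= real (density A) ->
  c <= real (indep_ratio S) <= 1 / 2.
Proof.
  intros H1 HA Hc.
  set (E := fun x => exists B, independent S B /\ density B = Finite x).
  assert (HE : E (real (density A))) by (exists A; split; [exact HA | apply density_finite]).
  assert (Hub : is_ub_Rbar E (1 / 2)).
  { intros x [B [HB HdB]]. simpl.
    replace x with (real (density B)) by (rewrite HdB; reflexivity).
    exact (density_no_consecutive B (independent_no_consecutive S B H1 HB)). }
  destruct (Lub_Rbar_correct E) as [Hlub Hleast].
  specialize (Hlub _ HE). specialize (Hleast _ Hub).
  unfold indep_ratio. fold E.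
  destruct (Lub_Rbar E); simpl in *; [lra | contradiction | contradiction].
Qed.

(* The q-th block of length 2k is [2kq, 2kq + 2k), and r = x mod 2k is the
   position of x inside its block. *)
Definition parity_blocks (i k : nat) (x : Z) : bool :=
  andb (2 * Z.of_nat i + 1 <=? x mod (2 * Z.of_nat k))%Z
       ((x mod (2 * Z.of_nat k)) mod 2 =? (x / (2 * Z.of_nat k)) mod 2)%Z.

Lemma parity_blocks_at (i k : nat) (q r : Z) : (0 <= r < 2 * Z.of_nat k)%Z ->
  parity_blocks i k (2 * Z.of_nat k * q + r) =
    andb (2 * Z.of_nat i + 1 <=? r)%Z (r mod 2 =? q mod 2)%Z.
Proof.
  intros Hr. unfold parity_blocks.
  rewrite <- (Z.mod_unique_pos _ _ q r Hr eq_refl), <- (Z.div_unique_pos _ _ q r Hr eq_refl).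
  reflexivity.
Qed.

Lemma Z_div_mod_add_small (x d m : Z) : (0 < m)%Z -> (0 <= d <= m)%Z ->
  exists c, (c = 0 \/ c = 1)%Z /\
    ((x + d) / m = x / m + c)%Z /\ ((x + d) mod m = x mod m + d - m * c)%Z.
Proof.
  intros Hm Hd.
  pose proof (Z.mod_pos_bound x m Hm) as Hr.
  pose proof (Z.div_mod x m ltac:(lia)) as Hx.
  destruct (Z_lt_le_dec (x mod m + d) m) as [Hlt | Hge].
  - exists 0%Z. split; [lia|]. split.
    + symmetry; apply (Z.div_unique_pos _ _ _ (x mod m + d)); lia.
    + symmetry; apply (Z.mod_unique_pos _ _ (x / m + 0)); lia.
  - exists 1%Z. split; [lia|]. split.
    + symmetry; apply (Z.div_unique_pos _ _ _ (x mod m + d - m)); lia.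
    + symmetry; apply (Z.mod_unique_pos _ _ (x / m + 1)); lia.
Qed.

Lemma parity_blocks_independent (i k : nat) : (i + 1 < k)%nat ->
  independent [1%Z; (2 * Z.of_nat i + 1)%Z; (2 * Z.of_nat k)%Z] (parity_blocks i k).
Proof.
  intros Hik.
  assert (Hshift : forall x d, In d [1%Z; (2 * Z.of_nat i + 1)%Z; (2 * Z.of_nat k)%Z] ->
            parity_blocks i k x = true -> parity_blocks i k (x + d) = true -> False).
  { intros x d Hd. unfold parity_blocks.
    remember (2 * Z.of_nat k)%Z as m eqn:Hm.
    pose proof (Z.mod_pos_bound (x + d) m ltac:(lia)) as Hrd.
    pose proof (Z.mod_pos_bound x m ltac:(lia)) as Hr.
    destruct (Z_div_mod_add_small x d m) as [c [Hc [-> Hmod]]];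
      [lia | destruct Hd as [<- | [<- | [<- | []]]]; lia |].
    rewrite Hmod in Hrd |- *. generalize (x / m)%Z (x mod m)%Z Hr Hrd. intros q r.
    rewrite !Bool.andb_true_iff, !Z.leb_le, !Z.eqb_eq.
    destruct Hd as [<- | [<- | [<- | []]]]; destruct Hc as [-> | ->];
      Z.div_mod_to_equations; lia. }
  intros x y Hx Hy Hin.
  destruct (Z.le_gt_cases y x).
  - replace (Z.abs (x - y)) with (x - y)%Z in Hin by lia.
    apply (Hshift y (x - y)%Z Hin Hy). replace (y + (x - y))%Z with x by ring. exact Hx.
  - replace (Z.abs (x - y)) with (y - x)%Z in Hin by lia.
    apply (Hshift x (y - x)%Z Hin Hx). replace (x + (y - x))%Z with y by ring. exact Hy.
Qed.

Lemma parity_blocks_block_ge (i k : nat) (q : Z) : (i < k)%nat ->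
  (k - i - 1 <= count_range (parity_blocks i k) (2 * Z.of_nat k * q) (2 * k))%nat.
Proof.
  intros Hik.
  destruct (Z.mod_pos_bound q 2 ltac:(lia)) as [He0 He1].
  set (e := Z.to_nat (q mod 2)%Z).
  assert (He : (q mod 2 = Z.of_nat e)%Z) by (unfold e; lia).
  (* the kept positions of block q start at r = 2i+2 (q even) or r = 2i+1 (q odd) *)
  apply Nat.le_trans with
    (count_range (parity_blocks i k) (2 * Z.of_nat k * q + Z.of_nat (2 * i + 2 - e))
       (2 * (k - i - 1))).
  - apply count_range_step2_ge. intros j Hj.
    replace (2 * Z.of_nat k * q + Z.of_nat (2 * i + 2 - e) + 2 * Z.of_nat j)%Z
      with (2 * Z.of_nat k * q + Z.of_nat (2 * i + 2 - e + 2 * j))%Z by lia.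
    rewrite parity_blocks_at, He by lia.
    rewrite Bool.andb_true_iff, Z.leb_le, Z.eqb_eq.
    Z.div_mod_to_equations. lia.
  - apply count_range_sub. lia.
Qed.

Lemma parity_blocks_density (i k : nat) : (i < k)%nat ->
  1 / 2 - (INR i + 2) / (2 * INR k) <= real (density (parity_blocks i k)).
Proof.
  intros Hik. apply density_ge_frequently. intros N.
  set (t := S N). set (n := (k - i - 1)%nat).
  exists (2 * k * t)%nat. split; [unfold t; nia|].
  assert (Hcount : (2 * t * n <= count_in (parity_blocks i k) (2 * k * t))%nat).
  { rewrite count_in_range.
    apply Nat.le_trans with
      (count_range (parity_blocks i k) (- Z.of_nat (2 * k * t)) (2 * t * (2 * k))).
    2: apply count_range_mono; lia.
    apply count_range_blocks_ge. intros j _.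
    replace (- Z.of_nat (2 * k * t) + Z.of_nat (j * (2 * k)))%Z
      with (2 * Z.of_nat k * (Z.of_nat j - Z.of_nat t))%Z by lia.
    apply parity_blocks_block_ge, Hik. }
  assert (HK : 1 <= INR k) by (apply (le_INR 1); lia).
  assert (HT : 1 <= INR t) by (apply (le_INR 1); unfold t; lia).
  assert (Hn : INR n = INR k - INR i - 1) by (unfold n; rewrite !minus_INR by lia; simpl; ring).
  assert (HnK : INR n <= INR k) by (apply le_INR; unfold n; lia).
  unfold dens_seq.
  apply le_INR in Hcount.
  replace (INR (2 * t * n)) with (2 * INR t * INR n) in Hcount by (rewrite !mult_INR; simpl; ring).
  replace (INR (2 * (2 * k * t) + 1)) with (4 * INR k * INR t + 1)
    by (rewrite plus_INR, !mult_INR; simpl; ring).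
  apply Rle_trans with (2 * INR t * INR n / (4 * INR k * INR t + 1)).
  - assert (Hdiff : 2 * INR t * INR n / (4 * INR k * INR t + 1) - (1 / 2 - (INR i + 2) / (2 * INR k))
                    = (4 * INR k * INR t - INR n + 1) / (2 * INR k * (4 * INR k * INR t + 1)))
      by (rewrite Hn; field; nra).
    assert (0 <= (4 * INR k * INR t - INR n + 1) / (2 * INR k * (4 * INR k * INR t + 1)))
      by (apply Rdiv_le_0_compat; nra).
    lra.
  - apply Rmult_le_compat_r; [left; apply Rinv_0_lt_compat; nra | exact Hcount].
Qed.

Theorem theorem23 (i : nat) (hi : (1 <= i)%nat) :
  is_lim_seq
    (fun k : nat =>
       real (indep_ratio [1%Z; (2 * Z.of_nat i + 1)%Z; (2 * Z.of_nat k)%Z]))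
    (1 / 2).
Proof.
  apply is_lim_seq_le_le_loc with
    (u := fun k => 1 / 2 - (INR i + 2) / 2 * / INR k) (w := fun _ => 1 / 2).
  - exists (i + 2)%nat. intros k Hk.
    replace (1 / 2 - (INR i + 2) / 2 * / INR k) with (1 / 2 - (INR i + 2) / (2 * INR k))
      by (field; apply not_0_INR; lia).
    apply (indep_ratio_bounds _ (parity_blocks i k)).
    + left; reflexivity.
    + apply parity_blocks_independent. lia.
    + apply parity_blocks_density. lia.
  - replace (Finite (1 / 2)) with (Rbar_minus (1 / 2) (Rbar_mult ((INR i + 2) / 2) 0))
      by (simpl; f_equal; ring).
    apply is_lim_seq_minus'; [apply is_lim_seq_const |].
    apply is_lim_seq_mult'; [apply is_lim_seq_const | apply is_lim_seq_inv_INR].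
  - apply is_lim_seq_const.
Qed.
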